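(* Let $N\ge3$ and consider, in the field variables $(\rho,\psi,\mu_1,\dots,\mu_{N-2})$, the hydrodynamic Poisson bracket $$\{F,G\}=\int\Big(\partial_xF_\psi G_\rho-F_\rho\partial_xG_\psi+\partial_xF_k\,\alpha_{kl}(\boldsymbol\mu)\,G_l+F_k\,\beta_{kl}(\boldsymbol\mu,\partial_x\boldsymbol\mu)\,G_l\Big)\mathrm dx,$$ with $\alpha_{kl}=(k+l)\mu_{k+l-1}$, $\beta_{kl}=k\,\partial_x\mu_{k+l-1}$, $k,l=1,\dots,N-2$ (summed), and $\mu_j=0$ for $j\ge N-1$. At points where $\mu_{N-2}\neq0$, the signature of this bracket is $(\lfloor N/2\rfloor,\lceil N/2\rceil)$ or $(\lceil N/2\rceil,\lfloor N/2\rfloor)$.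
   Context: Fields vanish at infinity with all derivatives; $F_\rho,F_\psi,F_k=\delta F/\delta\mu_k$ are functional derivatives. This bracket (Burby's closure of the one-dimensional Vlasov equation) is known to satisfy the Jacobi identity. A hydrodynamic bracket $\int(\partial_xF_n\alpha_{nm}G_m+F_n\beta_{nm}G_m)\mathrm dx$ is non-degenerate if $\alpha$ is invertible; a non-degenerate hydrodynamic Poisson bracket can be written, in suitable local coordinates $\boldsymbol\nu$, as $\int\partial_x\overline F_ng_{nm}\overline G_m\mathrm dx$ with $g$ constant symmetric non-degenerate (Dubrovin–Novikov), and its signature is the signature $(l,q)$ of $g$, $l$ the number of positive and $q$ the number of negative eigenvalues. *)

From HB Require Import structures.
From mathcomp Require Import all_boot all_order all_algebra.
From mathcomp Require Import polyrcf.
Set Implicit Arguments. Unset Strict Implicit. Unset Printing Implicit Defensive.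
Import Order.TTheory GRing.Theory Num.Theory.
Local Open Scope ring_scope.

Definition npos_eig (R : rcfType) (n : nat) (A : 'M[R]_n) : nat :=
  \sum_(x <- rootsR (char_poly A) | 0 < x) mup x (char_poly A).
Definition nneg_eig (R : rcfType) (n : nat) (A : 'M[R]_n) : nat :=
  \sum_(x <- rootsR (char_poly A) | x < 0) mup x (char_poly A).

Definition signature (R : rcfType) (n : nat) (A : 'M[R]_n) : nat * nat :=
  (npos_eig A, nneg_eig A).

Definition muN (R : rcfType) (N : nat) (mu : nat -> R) (j : nat) : R :=
  if (1 <= j <= N - 2)%N then mu j else 0.

(* Leading coefficient matrix alpha_{nm} of the hydrodynamic bracket
     { F, G } = \int ( d_x F_psi G_rho - F_rho d_x G_psi
                       + d_x F_k alpha_kl G_l + F_k beta_kl G_l ) dx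
   written in the form \int (d_x F_n alpha_nm G_m + F_n beta_nm G_m) dx
   in the field variables (rho, psi, mu_1, ..., mu_(N-2)),
   indexed 0 = rho, 1 = psi, i = k+1 for mu_k (k = 1..N-2).
   - the term d_x F_psi G_rho gives alpha_{psi rho} = 1;
   - the term -F_rho d_x G_psi = d_x F_rho G_psi after integration by parts
     (fields vanish at infinity), giving alpha_{rho psi} = 1;
   - alpha_{kl} = (k+l) mu_{k+l-1} on the mu-block. *)
Definition bracket_alpha (R : rcfType) (N : nat) (mu : nat -> R) : 'M[R]_N :=
  \matrix_(i < N, j < N)
    if ((val i == 0%N) && (val j == 1%N)) || ((val i == 1%N) && (val j == 0%N)) then 1
    else if (2 <= val i)%N && (2 <= val j)%N then
      let k := (val i - 1)%N in let l := (val j - 1)%N in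
      (k + l)%:R * muN N mu (k + l - 1)
    else 0.

(* Signature of the (non-degenerate) hydrodynamic Poisson bracket at the
   point with moments mu: the signature of its leading coefficient
   alpha (the contravariant flat metric g^{nm}); in Dubrovin-Novikov flat
   coordinates alpha becomes the constant matrix g (up to inversion,
   which preserves signature), and signature is invariant under the
   congruence alpha -> J alpha J^T induced by a change of coordinates. *)
Definition bracket_signature (R : rcfType) (N : nat) (mu : nat -> R) :=
  signature (bracket_alpha N mu).

(* Over R[i] the real symmetric matrix alpha is unitarily diagonalised, so its
   signature counts the signs of its real eigenvalues.  Apart from the
   hyperbolic rho-psi block, alpha is a Hankel matrix in the mu's vanishing
   below its antidiagonal, on which every entry is c = (N-1) mu_(N-2) <> 0; so
   no eigenvalue is zero.  On the span of rho and the mu_k with k >= floor(N/2)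
   (dimension ceil(N/2)) the form is c |x_k|^2 for k = (N-1)/2 if N is odd and
   0 if N is even; on the span of rho and the mu_k with k >= ceil(N/2)
   (dimension floor(N/2)) it vanishes.  A subspace on which the form is >= 0
   (<= 0) meets the span of the negative (positive) eigenvectors trivially, so
   for c > 0 there are at most floor(N/2) negative and ceil(N/2) positive
   eigenvalues; as they add up to N both bounds are attained.  The case c < 0
   is symmetric. *)

From HB Require Import structures.
From mathcomp Require Import all_boot all_order all_algebra.
From mathcomp Require Import polyrcf complex spectral sesquilinear.
From mathcomp Require Import zify.
Set Implicit Arguments. Unset Strict Implicit. Unset Printing Implicit Defensive.
Import Order.TTheory GRing.Theory Num.Theory.
Local Open Scope ring_scope.
Local Open Scope sesquilinear_scope.

Section CoordinateSubspace.
Variable F : fieldType.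

Definition coord_mx n (S : {set 'I_n}) : 'M[F]_(#|S|, n) :=
  \matrix_(a, j) (enum_val a == j)%:R.

Lemma mxrank_coord_mx n (S : {set 'I_n}) : \rank (coord_mx S) = #|S|.
Proof.
apply/eqP; rewrite eqn_leq rank_leq_row /=.
have coord_orth : coord_mx S *m (coord_mx S)^T = 1%:M.
  apply/matrixP => a b; rewrite !mxE (bigD1 (enum_val a)) //= big1 ?addr0.
    by rewrite !mxE eqxx mul1r (inj_eq enum_val_inj) eq_sym.
  by move=> j /negPf ja; rewrite !mxE eq_sym ja mul0r.
by rewrite -{1}(mxrank1 F #|S|) -coord_orth mxrankM_maxl.
Qed.

Lemma coord_mx_supp n (S : {set 'I_n}) (x : 'rV[F]_n) j :
  (x <= coord_mx S)%MS -> j \notin S -> x 0 j = 0.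
Proof.
move=> /submxP[y ->] jS; rewrite !mxE big1 // => a _; rewrite mxE.
by case: eqP => [aj|]; [move: jS; rewrite -aj enum_valP | rewrite mulr0].
Qed.

End CoordinateSubspace.

Section HermitianForms.
Variable C : numClosedFieldType.

Definition qform n (B : 'M[C]_n) (x : 'rV[C]_n) : C := (x *m B *m x^t*) 0 0.

Lemma qformN n (B : 'M[C]_n) x : qform (- B) x = - qform B x.
Proof. by rewrite /qform mulmxN mulNmx mxE. Qed.

Lemma qform_unitary_diag n (U : 'M[C]_n) (d w : 'rV[C]_n) :
  U \is unitarymx ->
  qform (U^t* *m diag_mx d *m U) (w *m U) = \sum_j d 0 j * (w 0 j * (w 0 j)^*).
Proof.
move=> Uu; rewrite /qform trmx_mul map_mxM !mulmxA mulmxtVK //.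
rewrite -[_ *m U *m U^t*]mulmxA (unitarymxP Uu) mulmx1 mxE.
by apply: eq_bigr => j _; rewrite mul_mx_diag !mxE mulrCA mulrA.
Qed.

Lemma diag_form_lt0 n (d w : 'rV[C]_n) :
  w != 0 -> (forall j, w 0 j != 0 -> d 0 j < 0) ->
  \sum_j d 0 j * (w 0 j * (w 0 j)^*) < 0.
Proof.
move=> w_neq0 dw; have [j wj] : exists j, w 0 j != 0.
  apply/existsP; apply: contraR w_neq0 => /existsPn w0.
  by apply/eqP/rowP => k; rewrite mxE; apply/eqP/negPn/w0.
rewrite (bigD1 j) //= -[0 in X in _ < X](addr0 0); apply: ltr_leD.
  by rewrite pmulr_llt0 ?dw ?mul_conjC_gt0.
apply: sumr_le0 => i _; have [-> | wi] := eqVneq (w 0 i) 0.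
  by rewrite !mul0r mulr0.
by rewrite nmulr_rle0 ?dw ?mul_conjC_ge0.
Qed.

Lemma card_neg_add_rank_le n m (U : 'M[C]_n) d (V : 'M[C]_(m, n)) :
  U \is unitarymx ->
  (forall x, (x <= V)%MS -> 0 <= qform (U^t* *m diag_mx d *m U) x) ->
  (#|[set i | (d 0 i < 0)%R]| + \rank V <= n)%N.
Proof.
move=> Uu V_ge0; set T := [set i | d 0 i < 0].
rewrite leqNgt; apply/negP => dim_gt.
pose W := coord_mx C T *m U.
have rankW : \rank W = #|T|.
  by rewrite mxrankMfree ?mxrank_coord_mx // row_free_unit unitarymx_unit.
have : (0 < \rank (W :&: V))%N.
  have := mxrank_sum_cap W V; have := rank_leq_col (W + V)%MS; lia.
rewrite lt0n mxrank_eq0 => WV_neq0; pose x := nz_row (W :&: V)%MS.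
have x_neq0 : x != 0 by rewrite nz_row_eq0.
have xW : (x <= W)%MS by exact: submx_trans (nz_row_sub _) (capmxSl W V).
have xV : (x <= V)%MS by exact: submx_trans (nz_row_sub _) (capmxSr W V).
have [y xE] := submxP xW; pose w := y *m coord_mx C T.
have w_neq0 : w != 0.
  by apply: contraNneq x_neq0 => w0; rewrite xE mulmxA -/w w0 mul0mx.
have w_supp j : w 0 j != 0 -> d 0 j < 0.
  by apply: contraR => jT; apply/eqP/(coord_mx_supp (submxMl _ _)); rewrite inE.
have := V_ge0 x xV; rewrite xE mulmxA -/w qform_unitary_diag // => ge0.
by have := le_lt_trans ge0 (diag_form_lt0 w_neq0 w_supp); rewrite ltxx.
Qed.

Lemma qform_diag_on n (B : 'M[C]_n) (S : {set 'I_n}) x :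
  {in S &, forall i j, i != j -> B i j = 0} -> (x <= coord_mx C S)%MS ->
  qform B x = \sum_j B j j * (x 0 j * (x 0 j)^*).
Proof.
move=> B_diag xS; rewrite /qform mxE; apply: eq_bigr => j _; rewrite !mxE.
have [jS | jS] := boolP (j \in S); last first.
  by rewrite (coord_mx_supp xS jS) conjC0 !(mul0r, mulr0).
rewrite (bigD1 j) //= big1 ?addr0 => [|i ij]; first by rewrite mulrAC mulrC.
have [iS | iS] := boolP (i \in S); last by rewrite (coord_mx_supp xS iS) mul0r.
by rewrite B_diag ?mulr0.
Qed.

End HermitianForms.

Lemma char_poly_conj (F : fieldType) n (U B : 'M[F]_n) : U \in unitmx ->
  char_poly (invmx U *m B *m U) = char_poly B.
Proof.
move=> Uu; rewrite /char_poly.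
have UCu : map_mx polyC U \in unitmx by rewrite map_unitmx.
have -> : char_poly_mx (invmx U *m B *m U) =
          invmx (map_mx polyC U) *m char_poly_mx B *m map_mx polyC U.
  rewrite /char_poly_mx mulmxBr mulmxBl !map_mxM map_invmx; congr (_ - _).
  by rewrite -mulmxA -scalar_mxC mulmxA mulVmx // mul1mx.
by rewrite !det_mulmx det_inv mulrC mulrA mulrV ?mul1r.
Qed.

Lemma sum_count_mem (T : eqType) (s t : seq T) (P : pred T) :
  uniq s -> {subset t <= s} ->
  (\sum_(x <- s | P x) count_mem x t)%N = count P t.
Proof.
move=> s_uniq; elim: t => [|y t IHt] ts; first by rewrite big1.
have ys : y \in s by apply: ts; rewrite mem_head.
rewrite /= big_split /= IHt => [|z zt]; last by apply: ts; rewrite inE zt orbT.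
congr (_ + _)%N; rewrite (big_rem _ ys) eqxx big1_seq ?addn0.
  by case: (P y).
move=> z /andP[_ zs]; apply/eqP; rewrite eqb0; apply: contraTneq zs => <-.
by rewrite mem_rem_uniqF.
Qed.

Lemma sum_mup_prod_XsubC (R : rcfType) n (r : 'I_n -> R) (P : pred R) :
  let p := \prod_(i < n) ('X - (r i)%:P) in
  (\sum_(x <- rootsR p | P x) mup x p)%N = #|[set i | P (r i)]|.
Proof.
move=> p; have pE : p = \prod_(y <- map r (enum 'I_n)) ('X - y%:P).
  by rewrite big_map big_enum.
have p_neq0 : p != 0 by rewrite pE monic_neq0 ?monic_prod_XsubC.
under eq_bigr => x _ do rewrite pE mu_prod_XsubC -pE.
rewrite sum_count_mem ?uniq_roots //.
  rewrite count_map cardsE cardE /enum_mem size_filter.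
  by rewrite (@eq_filter _ _ predT) // filter_predT; apply: eq_count.
move=> y /mapP[i _ ->]; rewrite -roots_on_rootsR //=.
apply/rootP; rewrite /p horner_prod; apply/eqP/prodf_eq0; exists i => //.
by rewrite hornerXsubC subrr.
Qed.

Section RealSymmetric.
Variables (R : rcfType) (n : nat).
Implicit Types (A : 'M[R]_n) (r : 'I_n -> R).
Local Notation toC := (real_complex R).

Lemma real_symmetric_spectral A : A^T = A ->
  exists U : 'M[R[i]]_n, exists r,
    [/\ U \is unitarymx,
        map_mx toC A = U^t* *m diag_mx (\row_i toC (r i)) *m U &
        char_poly A = \prod_i ('X - (r i)%:P)].
Proof.
move=> A_sym; set AC := map_mx toC A.
have AC_herm : AC \is hermsymmx.
  apply: realsym_hermsym.
    apply/is_hermitianmxP.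
    by rewrite expr0 scale1r map_mx_id // /AC map_trmx A_sym.
  by apply/mxOverP => i j; rewrite mxE; apply/complex_realP; exists (A i j).
have /orthomx_spectralP ACE := hermitian_normalmx AC_herm.
have d_real := hermitian_spectral_diag_real AC_herm.
set U := spectralmx AC in ACE; set d := spectral_diag AC in ACE d_real.
have Uu : U \is unitarymx by apply: spectral_unitarymx.
pose r i := complex.Re (d 0 i).
have dE : d = \row_i toC (r i).
  by apply/rowP => i; rewrite mxE RRe_real //; apply: (mxOverP d_real).
exists U, r; split => //; first by rewrite -dE -invmx_unitary.
apply: (@map_poly_inj _ _ toC); rewrite map_char_poly -/AC ACE.
rewrite char_poly_conj ?unitarymx_unit // char_poly_trig ?diag_mx_is_trig //.
rewrite rmorph_prod; apply: eq_bigr => i _.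
by rewrite /= map_polyXsubC dE !mxE eqxx mulr1n.
Qed.

Lemma signature_prod_XsubC A r : char_poly A = \prod_i ('X - (r i)%:P) ->
  signature A = (#|[set i | 0 < r i]|, #|[set i | r i < 0]|).
Proof.
by rewrite /signature /npos_eig /nneg_eig => ->; rewrite !sum_mup_prod_XsubC.
Qed.

Lemma char_poly_roots_neq0 A r : char_poly A = \prod_i ('X - (r i)%:P) ->
  (forall x : 'rV_n, x *m A = 0 -> x = 0) -> forall i, r i != 0.
Proof.
move=> cpA A_inj i; apply/negP => /eqP ri0.
have : eigenvalue A 0.
  rewrite eigenvalue_root_char cpA -ri0; apply/rootP.
  rewrite horner_prod; apply/eqP/prodf_eq0.
  by exists i; rewrite ?hornerXsubC ?subrr.
case/eigenvalueP => v; rewrite scale0r => /A_inj ->; by rewrite eqxx.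
Qed.

Lemma card_gt0_add_lt0 r : (forall i, r i != 0) ->
  (#|[set i | (0 < r i)%R]| + #|[set i | (r i < 0)%R]|)%N = n.
Proof.
move=> r_neq0; have -> : [set i | r i < 0] = ~: [set i | 0 < r i].
  by apply/setP => i; rewrite !inE -leNgt le_eqVlt (negbTE (r_neq0 i)).
by rewrite cardsC card_ord.
Qed.

End RealSymmetric.

Section Diagonalized.
Variables (R : rcfType) (n : nat) (A : 'M[R]_n).
Variables (U : 'M[R[i]]_n) (r : 'I_n -> R).
Local Notation toC := (real_complex R).
Hypothesis U_unitary : U \is unitarymx.
Hypothesis A_diag : map_mx toC A = U^t* *m diag_mx (\row_i toC (r i)) *m U.

Lemma card_lt0_add_rank_le m (V : 'M_(m, n)) :
  (forall x, (x <= V)%MS -> 0 <= qform (map_mx toC A) x) ->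
  (#|[set i | (r i < 0)%R]| + \rank V <= n)%N.
Proof.
rewrite A_diag => /(card_neg_add_rank_le U_unitary).
by under eq_finset => i do rewrite mxE ltcE /= eqxx.
Qed.

Lemma card_gt0_add_rank_le m (V : 'M_(m, n)) :
  (forall x, (x <= V)%MS -> qform (map_mx toC A) x <= 0) ->
  (#|[set i | (0 < r i)%R]| + \rank V <= n)%N.
Proof.
move=> V_le0.
have := @card_neg_add_rank_le _ _ _ U (- \row_i toC (r i)) V U_unitary.
under eq_finset => i do rewrite !mxE oppr_lt0 ltcE /= eqxx.
apply=> x /V_le0; rewrite A_diag raddfN /= mulmxN mulNmx qformN.
by rewrite oppr_ge0.
Qed.

End Diagonalized.

Lemma pivots_mulmx_eq0 (F : idomainType) n (A : 'M[F]_n) :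
  (forall i, exists2 j, A i j != 0 & forall k : 'I_n, (i < k)%N -> A k j = 0) ->
  forall x : 'rV_n, x *m A = 0 -> x = 0.
Proof.
move=> pivot x xA; apply/rowP => i; rewrite mxE.
suff x_eq0 k (l : 'I_n) : (l < k)%N -> x 0 l = 0 by apply: (x_eq0 i.+1).
elim: k l => [//|k IHk] l; rewrite ltnS leq_eqVlt => /orP[/eqP lk | /IHk //].
have [j Alj Aj_below] := pivot l.
have /matrixP/(_ 0 j) := xA; rewrite !mxE (bigD1 l) //= big1 => [|m ml].
  by rewrite addr0 => /eqP; rewrite mulf_eq0 (negbTE Alj) orbF => /eqP.
case: (ltngtP m l) => [ml' | lm | /val_inj ml']; last by rewrite ml' eqxx in ml.
  by rewrite IHk ?mul0r // -lk.
by rewrite Aj_below ?mulr0.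
Qed.

(* Index 0 (rho) together with the indices >= t; the psi index 1 is left out,
   as the rho-psi block of alpha is hyperbolic. *)
Definition tail_coords n t : {set 'I_n} :=
  [set i : 'I_n | (i == 0%N :> nat) || (t <= i)%N].

Lemma card_tail_coords n t : (0 < t <= n)%N -> #|tail_coords n t| = (n - t).+1.
Proof.
case/andP=> t_gt0 t_le_n.
have -> : #|tail_coords n t| =
          count [pred i : nat | (i == 0)%N || (t <= i)%N] (iota 0 n).
  rewrite cardsE cardE -val_enum_ord count_map /enum_mem size_filter.
  by rewrite (@eq_filter _ _ predT) // filter_predT; apply: eq_count.
have -> : n = (1 + (t.-1 + (n - t)))%N by lia.
rewrite !iotaD !count_cat /= (@eq_in_count _ _ pred0); last first.
  by move=> i; rewrite mem_iota /= => /andP[? ?]; apply/negbTE/norP; split; lia.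
rewrite (@eq_in_count _ _ predT (iota _ (n - t))) => [|i]; last first.
  by rewrite mem_iota /= => /andP[? ?]; apply/orP; right; lia.
by rewrite count_pred0 count_predT size_iota; lia.
Qed.

Section BracketAlpha.
Variables (R : rcfType) (N : nat) (mu : nat -> R).
Hypothesis N_ge3 : (3 <= N)%N.
Local Notation A := (bracket_alpha N mu).
Local Notation c := ((N - 1)%:R * mu (N - 2)%N).
Local Notation toC := (real_complex R).

Lemma bracket_alpha_sym : A^T = A.
Proof.
apply/matrixP => i j; rewrite !mxE.
by case: (val i) (val j) => [|[|a]] [|[|b]] //=; rewrite addnC.
Qed.

Lemma bracket_alpha_rho_psi (i j : 'I_N) :
  (minn i j < 2)%N -> A i j = (i + j == 1)%N%:R.
Proof.
case: i j => [a a_lt] [b b_lt]; rewrite mxE /=.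
by case: a b {a_lt b_lt} => [|[|a]] [|[|b]] //=; rewrite !minnSS.
Qed.

Lemma bracket_alpha_mu (i j : 'I_N) :
  (2 <= i)%N -> (2 <= j)%N -> (N + 1 <= i + j)%N ->
  A i j = if (i + j == N + 1)%N then c else 0.
Proof.
move=> i_ge2 j_ge2 ij_ge; rewrite mxE.
have -> : ((i == 0%N :> nat) && (j == 1%N :> nat)) ||
          ((i == 1%N :> nat) && (j == 0%N :> nat)) = false.
  by apply/negbTE/negP => /orP[]/andP[/eqP /= ? /eqP /= ?]; lia.
rewrite i_ge2 j_ge2 /= /muN; have [ij | ij] := eqVneq (i + j)%N (N + 1)%N.
  have -> : (i - 1 + (j - 1))%N = (N - 1)%N by lia.
  by rewrite ifT; [congr (_ * mu _) | apply/andP; split]; lia.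
by rewrite ifF ?mulr0 //; apply/negbTE/negP => /andP[? ?]; lia.
Qed.

Lemma bracket_antidiag_neq0 : mu (N - 2)%N != 0 -> c != 0.
Proof. by move=> mu_neq0; rewrite mulf_neq0 // pnatr_eq0 -lt0n; lia. Qed.

(* The pivot of row i is column 1 - i in the rho-psi block and the
   antidiagonal column N + 1 - i in the mu block. *)
Lemma bracket_alpha_kernel :
  mu (N - 2)%N != 0 -> forall x : 'rV_N, x *m A = 0 -> x = 0.
Proof.
move=> /bracket_antidiag_neq0 c_neq0.
apply: pivots_mulmx_eq0 => i.
have := ltn_ord i; have [i2 | i2] := ltnP i 2 => i_lt.
  have j_lt : (1 - i < N)%N by lia.
  exists (Ordinal j_lt) => [|k ik]; rewrite bracket_alpha_rho_psi /=; try lia.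
    by rewrite subnKC ?oner_eq0 //; lia.
  by suff /negbTE -> : (k + (1 - i) != 1)%N by []; lia.
have j_lt : (N + 1 - i < N)%N by lia.
exists (Ordinal j_lt) => [|k ik]; rewrite bracket_alpha_mu /=; try lia.
  by rewrite ifT //; lia.
by rewrite ifF //; lia.
Qed.

Lemma bracket_alpha_tail t (i j : 'I_N) : (N./2 < t)%N ->
  i \in tail_coords N t -> j \in tail_coords N t ->
  A i j = if (i == j) && (i + i == N + 1)%N then c else 0.
Proof.
rewrite !inE => t_gt ti tj; have [<- | ij] /= := eqVneq i j.
  have [i_small | i_big] := ltnP i 2.
    have i0 : nat_of_ord i = 0%N by lia.
    by rewrite bracket_alpha_rho_psi ?minnn i0 // ifF //; lia.
  by rewrite bracket_alpha_mu //; lia.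
have [ij_small | ij_big] := ltnP (minn i j) 2.
  rewrite bracket_alpha_rho_psi //.
  by suff /negbTE -> : (i + j != 1)%N by []; lia.
have ij' : nat_of_ord i != nat_of_ord j := ij.
by rewrite bracket_alpha_mu ?ifF //; lia.
Qed.

Lemma qform_bracket_tail t (x : 'rV[R[i]]_N) :
  (N./2 < t)%N -> (x <= coord_mx _ (tail_coords N t))%MS ->
  qform (map_mx toC A) x =
    toC c * \sum_(j : 'I_N | (j + j == N + 1)%N) (x 0 j * (x 0 j)^*).
Proof.
move=> t_gt xS; rewrite (qform_diag_on _ xS) => [|i j ti tj ij]; last first.
  by rewrite mxE (bracket_alpha_tail t_gt ti tj) (negbTE ij) rmorph0.
rewrite [in RHS]big_mkcond mulr_sumr; apply: eq_bigr => j _; rewrite mxE.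
have [jS | jS] := boolP (j \in tail_coords N t); last first.
  by rewrite (coord_mx_supp xS jS) conjC0 !(mul0r, mulr0) if_same mulr0.
rewrite (bracket_alpha_tail t_gt jS jS) eqxx /=.
by case: ifP; rewrite ?rmorph0 ?mul0r ?mulr0.
Qed.

Lemma qform_bracket_tail_even (x : 'rV[R[i]]_N) :
  (x <= coord_mx _ (tail_coords N (uphalf N).+1))%MS ->
  qform (map_mx toC A) x = 0.
Proof.
move=> xS; rewrite (qform_bracket_tail _ xS); last by lia.
rewrite big1 ?mulr0 // => j /eqP jj; rewrite (coord_mx_supp xS) ?mul0r //.
by rewrite inE negb_or -ltnNge; apply/andP; split; lia.
Qed.

Lemma qform_bracket_tail_ge0 t : 0 < c -> (N./2 < t)%N ->
  forall x, (x <= coord_mx _ (tail_coords N t))%MS ->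
  0 <= qform (map_mx toC A) x.
Proof.
move=> c_gt0 t_gt x xS; rewrite (qform_bracket_tail t_gt xS).
apply: mulr_ge0; first by rewrite ler0c ltW.
by apply: sumr_ge0 => j _; apply: mul_conjC_ge0.
Qed.

Lemma qform_bracket_tail_le0 t : c < 0 -> (N./2 < t)%N ->
  forall x, (x <= coord_mx _ (tail_coords N t))%MS ->
  qform (map_mx toC A) x <= 0.
Proof.
move=> c_lt0 t_gt x xS; rewrite (qform_bracket_tail t_gt xS).
apply: mulr_le0_ge0; first by rewrite -[X in _ <= X](rmorph0 toC) lecR ltW.
by apply: sumr_ge0 => j _; apply: mul_conjC_ge0.
Qed.

End BracketAlpha.

Theorem proposition7 (R : rcfType) (N : nat) (mu : nat -> R) :
  (3 <= N)%N -> mu (N - 2)%N != 0 ->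
  bracket_signature N mu = (N./2, uphalf N) \/
  bracket_signature N mu = (uphalf N, N./2).
Proof.
move=> N_ge3 mu_neq0.
have [U [r [Uu AU cpA]]] := real_symmetric_spectral (bracket_alpha_sym N mu).
rewrite /bracket_signature (signature_prod_XsubC cpA).
have r_neq0 := char_poly_roots_neq0 cpA (bracket_alpha_kernel N_ge3 mu_neq0).
have card_r := card_gt0_add_lt0 r_neq0.
have rank_odd : \rank (coord_mx R[i] (tail_coords N (N./2).+1)) = uphalf N.
  by rewrite mxrank_coord_mx card_tail_coords; lia.
have rank_even : \rank (coord_mx R[i] (tail_coords N (uphalf N).+1)) = N./2.
  by rewrite mxrank_coord_mx card_tail_coords; lia.
have pos_even : (#|[set i | (0 < r i)%R]| + N./2 <= N)%N.
  rewrite -rank_even; apply: (card_gt0_add_rank_le Uu AU) => x.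
  by move/(qform_bracket_tail_even mu N_ge3) ->.
have neg_even : (#|[set i | (r i < 0)%R]| + N./2 <= N)%N.
  rewrite -rank_even; apply: (card_lt0_add_rank_le Uu AU) => x.
  by move/(qform_bracket_tail_even mu N_ge3) ->.
have := bracket_antidiag_neq0 N_ge3 mu_neq0.
rewrite neq_lt => /orP[c_lt0 | c_gt0].
  have := qform_bracket_tail_le0 N_ge3 c_lt0 (ltnSn _).
  move/(card_gt0_add_rank_le Uu AU); rewrite rank_odd => pos_odd.
  by left; congr pair; lia.
have := qform_bracket_tail_ge0 N_ge3 c_gt0 (ltnSn _).
move/(card_lt0_add_rank_le Uu AU); rewrite rank_odd => neg_odd.
by right; congr pair; lia.
Qed.
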